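(* Let $\mathcal{S}$ be a discrete subgroup of $O(n+1)$. Then $\mathcal{S}$ satisfies the spanning property if and only if it satisfies the bounded ratio condition $$\sup_{a\in\mathbb{S}^n}\gamma_a<\infty,\qquad \gamma_a:=\max_{\mathbb{S}^n}h_a\Big/\min_{\mathbb{S}^n}h_a,$$ where $h_a$ is the support function of $P_a=\mathrm{conv}\{\phi(a):\phi\in\mathcal{S}\}$.
   Context: The spanning property: for every $a\in\mathbb{S}^n$, $P_a$ is a non-degenerate $(n+1)$-dimensional polytope in $\mathbb{R}^{n+1}$. The support function of a compact convex set $K$ is $h(x)=\max\{z\cdot x:z\in K\}$, $x\in\mathbb{S}^n$. *)

From HB Require Import structures.
From mathcomp Require Import all_boot all_order all_algebra.
From mathcomp Require Import boolp classical_sets reals.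
Set Implicit Arguments. Unset Strict Implicit. Unset Printing Implicit Defensive.
Import Order.TTheory GRing.Theory Num.Theory.
Local Open Scope ring_scope.
Local Open Scope classical_set_scope.

Section Defs.
Variable R : realType.

Definition dotv (m : nat) (u v : 'cV[R]_m) : R := \sum_(i < m) u i 0 * v i 0.

Definition sphere (n : nat) : set 'cV[R]_n.+1 := [set a | dotv a a = 1].
Arguments sphere n : clear implicits.

Definition orthogonal_mx (m : nat) (M : 'M[R]_m) : Prop := M *m M^T = 1%:M.

Definition subgroup_O (n : nat) (S : set 'M[R]_n.+1) : Prop :=
  [/\ (forall M, S M -> orthogonal_mx M),
      S 1%:M,
      (forall M N, S M -> S N -> S (M *m N)) &
      (forall M, S M -> S (invmx M))].

Definition discrete_mx (n : nat) (S : set 'M[R]_n.+1) : Prop :=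
  forall M, S M -> exists e : R, 0 < e /\
    forall N, S N -> (forall i j, `|N i j - M i j| < e) -> N = M.

Definition conv (m : nat) (A : set 'cV[R]_m) : set 'cV[R]_m :=
  [set z | exists (k : nat) (w : 'I_k -> R) (p : 'I_k -> 'cV[R]_m),
     [/\ (forall i, 0 <= w i), \sum_(i < k) w i = 1,
         (forall i, A (p i)) & z = \sum_(i < k) w i *: p i]].

Definition orbit (n : nat) (S : set 'M[R]_n.+1) (a : 'cV[R]_n.+1) :=
  [set z | exists phi, S phi /\ z = phi *m a].
Definition P (n : nat) (S : set 'M[R]_n.+1) (a : 'cV[R]_n.+1) := conv (orbit S a).

(* K is (n+1)-dimensional: its affine hull is all of R^(n+1), i.e. K contains
   n+2 affinely independent points p0, p_0, ..., p_n. *)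
Definition full_dim (n : nat) (K : set 'cV[R]_n.+1) : Prop :=
  exists (p0 : 'cV[R]_n.+1) (p : 'I_n.+1 -> 'cV[R]_n.+1),
    [/\ K p0, (forall j, K (p j)) &
        \det (\matrix_(i, j) (p j i 0 - p0 i 0)) != 0].

Definition spanning (n : nat) (S : set 'M[R]_n.+1) : Prop :=
  forall a, sphere n a -> full_dim (P S a).

(* Support function h_K(x) = max {z . x : z in K} (a sup; attained for
   compact K). *)
Definition support_fn (n : nat) (K : set 'cV[R]_n.+1) (x : 'cV[R]_n.+1) : R :=
  sup [set dotv z x | z in K].

Definition hmax (n : nat) (S : set 'M[R]_n.+1) (a : 'cV[R]_n.+1) : R :=
  sup [set support_fn (P S a) x | x in sphere n].
Definition hmin (n : nat) (S : set 'M[R]_n.+1) (a : 'cV[R]_n.+1) : R :=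
  inf [set support_fn (P S a) x | x in sphere n].
Definition gamma (n : nat) (S : set 'M[R]_n.+1) (a : 'cV[R]_n.+1) : R :=
  hmax S a / hmin S a.

(* Bounded ratio condition sup_a gamma_a < oo: the ratios are well defined
   (min h_a > 0) and uniformly bounded. *)
Definition bounded_ratio (n : nat) (S : set 'M[R]_n.+1) : Prop :=
  (forall a, sphere n a -> 0 < hmin S a) /\
  exists C : R, forall a, sphere n a -> gamma S a <= C.

End Defs.
Arguments sphere {R} n.

(* A discrete subgroup [S] of the compact group O(n+1) is finite. If [S] has the
   spanning property, then no nonzero vector is fixed by [S] and no proper
   subspace is [S]-invariant; hence the orbit of a unit vector [a] sums to 0 and
   is a tight frame: [sum_phi <phi a, x>^2] is a constant [mu >= 1] on the
   sphere. As the numbers [<phi a, x>] lie in [[-1, h_a(x)]] and sum to 0, this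
   forces [h_a(x) >= 1 / (2 |S|)], while [h_a <= 1]; so [gamma_a <= 2 |S|].
   Conversely, if [P_a] is not full-dimensional, the orbit of [a] lies in an
   affine hyperplane [<z, u> = <a, u>], whence [h_a(u) + h_a(-u) <= 0] and
   [min h_a <= 0]. *)

From HB Require Import structures.
From mathcomp Require Import all_boot all_order all_algebra.
From mathcomp Require Import boolp classical_sets cardinality reals.
From mathcomp Require Import complex.
From mathcomp Require Import ring lra.
Set Implicit Arguments. Unset Strict Implicit. Unset Printing Implicit Defensive.
Import Order.TTheory GRing.Theory Num.Theory.
Local Open Scope ring_scope.

Section InnerProduct.
Variables (R : realType) (m : nat).
Implicit Types u v x : 'cV[R]_m.

Lemma dotvE u v : dotv u v = (u^T *m v) 0 0.
Proof. by rewrite /dotv mxE; apply: eq_bigr => i _; rewrite mxE. Qed.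

Lemma dotvC u v : dotv u v = dotv v u.
Proof. by apply: eq_bigr => i _; rewrite mulrC. Qed.

Lemma dotvDl u v x : dotv (u + v) x = dotv u x + dotv v x.
Proof. by rewrite /dotv -big_split; apply: eq_bigr => i _; rewrite mxE mulrDl. Qed.

Lemma dotvZl (c : R) u x : dotv (c *: u) x = c * dotv u x.
Proof. by rewrite /dotv mulr_sumr; apply: eq_bigr => i _; rewrite mxE mulrA. Qed.

Lemma dotvZr (c : R) u x : dotv u (c *: x) = c * dotv u x.
Proof. by rewrite dotvC dotvZl dotvC. Qed.

Lemma dotvDr u v x : dotv x (u + v) = dotv x u + dotv x v.
Proof. by rewrite dotvC dotvDl !(dotvC x). Qed.

Lemma dotvNl u x : dotv (- u) x = - dotv u x.
Proof. by rewrite -scaleN1r dotvZl mulN1r. Qed.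

Lemma dotvNr u x : dotv u (- x) = - dotv u x.
Proof. by rewrite dotvC dotvNl dotvC. Qed.

Lemma dotvBl u v x : dotv (u - v) x = dotv u x - dotv v x.
Proof. by rewrite dotvDl dotvNl. Qed.

Lemma dotv0l x : dotv 0 x = 0.
Proof. by rewrite -(scale0r 0) dotvZl mul0r. Qed.

Lemma dotv_suml (I : Type) (r : seq I) (F : I -> 'cV[R]_m) x :
  dotv (\sum_(i <- r) F i) x = \sum_(i <- r) dotv (F i) x.
Proof. by elim/big_rec2: _ => [|i y1 y2 _ <-]; rewrite ?dotv0l ?dotvDl. Qed.

Lemma dotv_sumr (I : Type) (r : seq I) (F : I -> 'cV[R]_m) x :
  dotv x (\sum_(i <- r) F i) = \sum_(i <- r) dotv x (F i).
Proof. by rewrite dotvC dotv_suml; apply: eq_bigr => i _; rewrite dotvC. Qed.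

Lemma dotv_mull (A : 'M[R]_m) u v : dotv (A *m u) v = dotv u (A^T *m v).
Proof. by rewrite !dotvE trmx_mul mulmxA. Qed.

Lemma dotv_outer p x : dotv x ((p *m p^T) *m x) = dotv p x ^+ 2.
Proof. by rewrite !dotvE -mulmxA mulmxA [in LHS]mxE big_ord1 -!dotvE dotvC. Qed.

Lemma dotvv_ge0 u : 0 <= dotv u u.
Proof. by apply: sumr_ge0 => i _; rewrite -expr2 sqr_ge0. Qed.

Lemma dotvv_eq0 u : (dotv u u == 0) = (u == 0).
Proof.
apply/idP/eqP => [|->]; last by rewrite dotv0l.
rewrite psumr_eq0 => [/allP u0|i _]; last by rewrite -expr2 sqr_ge0.
apply/matrixP => i j; rewrite (ord1 j) mxE.
by have /implyP := u0 i (mem_index_enum _); rewrite -expr2 sqrf_eq0 => /(_ isT)/eqP.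
Qed.

Lemma dotvv_gt0 u : u != 0 -> 0 < dotv u u.
Proof. by rewrite lt_def dotvv_ge0 dotvv_eq0 => ->. Qed.

End InnerProduct.

Section Sphere.
Variables (R : realType) (n : nat).
Implicit Types u x : 'cV[R]_n.+1.

Lemma sphereN x : sphere n x -> sphere n (- x).
Proof. by rewrite /sphere /= dotvNl dotvNr opprK. Qed.

Lemma sphere_le1 u x : sphere n u -> sphere n x -> dotv u x <= 1.
Proof.
rewrite /sphere /= => uu xx; have := dotvv_ge0 (u - x).
by rewrite dotvBl !(dotvC _ (u - x)) !dotvBl uu xx (dotvC x u); lra.
Qed.

Lemma sphere_geN1 u x : sphere n u -> sphere n x -> -1 <= dotv u x.
Proof. by move=> su /sphereN sx; rewrite lerNl -dotvNr sphere_le1. Qed.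

Lemma sphere_delta : sphere n (delta_mx 0 0 : 'cV[R]_n.+1).
Proof.
rewrite /sphere /= /dotv (bigD1 0) //= big1 ?addr0; first by rewrite mxE eqxx mulr1.
by move=> i /negbTE i0; rewrite mxE i0 mul0r.
Qed.

Lemma sphere_normalize u : u != 0 -> exists r : R, sphere n (r *: u).
Proof.
move=> u0; exists (Num.sqrt (dotv u u))^-1.
rewrite /sphere /= dotvZl dotvZr mulrA -expr2 exprVn.
by rewrite sqr_sqrtr ?dotvv_ge0 // mulVf // gt_eqF // dotvv_gt0.
Qed.

End Sphere.

Section OrthogonalMatrix.
Variables (R : realType) (m : nat) (M : 'M[R]_m).
Hypothesis orthoM : orthogonal_mx M.

Lemma orthogonal_mxT : M^T *m M = 1%:M.
Proof. exact: mulmx1C. Qed.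

Lemma orthogonal_dotv u v : dotv (M *m u) (M *m v) = dotv u v.
Proof. by rewrite dotv_mull mulmxA orthogonal_mxT mul1mx. Qed.

Lemma orthogonal_mx_entry i j : `|M i j| <= 1.
Proof.
have /matrixP/(_ i i) := orthoM; rewrite !mxE eqxx /= => rowi.
have : M i j ^+ 2 <= 1.
  suff : M i j ^+ 2 <= \sum_k M i k * M^T k i by rewrite rowi.
  rewrite (bigD1 j) //= mxE -expr2 lerDl.
  by apply: sumr_ge0 => k _; rewrite mxE -expr2 sqr_ge0.
by rewrite -real_normK ?num_real // => sq1; have := normr_ge0 (M i j); nra.
Qed.

End OrthogonalMatrix.

Section Subgroup.
Variables (R : realType) (n : nat) (S : set 'M[R]_n.+1).
Hypothesis groupS : subgroup_O S.

Lemma subgroup_orthogonal M : S M -> orthogonal_mx M.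
Proof. by case: groupS => orthoS _ _ _ /orthoS. Qed.

Lemma subgroup1 : S 1%:M.
Proof. by case: groupS. Qed.

Lemma subgroupM M N : S M -> S N -> S (M *m N).
Proof. by case: groupS => _ _ mulS _; apply: mulS. Qed.

Lemma subgroupT M : S M -> S M^T.
Proof.
move=> SM; have orthoM := subgroup_orthogonal SM.
have [Munit _] := mulmx1_unit orthoM.
suff -> : M^T = invmx M by case: groupS => _ _ _; apply.
by rewrite -[M^T]mul1mx -(mulVmx Munit) -mulmxA orthoM mulmx1.
Qed.

Lemma subgroup_sphere M a : S M -> sphere n a -> sphere n (M *m a).
Proof. by move=> SM; rewrite /sphere /= orthogonal_dotv //; apply: subgroup_orthogonal. Qed.

(* [M^T N - 1 = M^T (N - M)] and the entries of [M^T] lie in [[-1, 1]]. *)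
Lemma subgroup_separated (e : R) : 0 < e ->
  (forall N, S N -> (forall i j, `|N i j - (1%:M : 'M_n.+1) i j| < e) -> N = 1%:M) ->
  forall M N, S M -> S N -> (forall i j, `|N i j - M i j| < e / n.+1%:R) -> N = M.
Proof.
move=> e0 isolated1 M N SM SN closeMN.
have orthoM := subgroup_orthogonal SM.
suff MN1 : M^T *m N = 1%:M by rewrite -[LHS]mul1mx -orthoM -mulmxA MN1 mulmx1.
apply: isolated1 => [|i j]; first by apply: subgroupM => //; apply: subgroupT.
have -> : (M^T *m N) i j - (1%:M : 'M_n.+1) i j = (M^T *m (N - M)) i j.
  by rewrite mulmxBr orthogonal_mxT // [in RHS]mxE [(- _ : 'M_n.+1) i j]mxE.
rewrite mxE.
apply: le_lt_trans (ler_norm_sum _ _ _) _.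
apply: (@lt_le_trans _ _ (\sum_(k < n.+1) e / n.+1%:R)); last first.
  by rewrite sumr_const card_ord -[_ *+ n.+1]mulr_natr divfK // pnatr_eq0.
apply: ltr_sum => [|k _]; first by apply/hasP; exists ord0; rewrite ?mem_index_enum.
rewrite normrM !mxE; apply: le_lt_trans (closeMN k j).
by rewrite ler_piMl ?normr_ge0 ?orthogonal_mx_entry.
Qed.

End Subgroup.

Section GridCoding.
Variable R : realType.

Definition grid_index (K : nat) (x : R) : nat := Num.truncn ((x + 1) * K%:R).

Lemma grid_index_lt K x : `|x| <= 1 -> (grid_index K x < K.*2.+1)%N.
Proof.
rewrite ler_norml => /andP[x_geN1 x_le1].
have K0 : 0 <= K%:R :> R by [].
rewrite truncn_lt_nat; last by apply: mulr_ge0 => //; lra.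
by rewrite -addn1 natrD -muln2 natrM; nra.
Qed.

Lemma grid_index_close K x y : `|x| <= 1 -> `|y| <= 1 ->
  grid_index K x = grid_index K y -> `|y - x| * K%:R < 1.
Proof.
rewrite !ler_norml /grid_index => /andP[x_geN1 x_le1] /andP[y_geN1 y_le1] xy.
have K0 : 0 <= K%:R :> R by [].
have xK0 : 0 <= (x + 1) * K%:R by apply: mulr_ge0 => //; lra.
have yK0 : 0 <= (y + 1) * K%:R by apply: mulr_ge0 => //; lra.
have := truncn_itv xK0; have := truncn_itv yK0; rewrite xy -addn1 natrD.
set t := Num.truncn _ => /andP[ty1 ty2] /andP[tx1 tx2].
rewrite -(ger0_norm K0) -normrM ltr_norml; apply/andP; split; nra.
Qed.

End GridCoding.

(* Two points of [T] in the same cell of the grid of mesh [1 / K < d] on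
   [[-1, 1]^(p * q)] coincide, so [T] injects into the finite set of cells. *)
Lemma finite_separated_mx (R : realType) (p q : nat) (T : set 'M[R]_(p, q))
    (d : R) :
  0 < d -> (forall M, T M -> forall i j, `|M i j| <= 1) ->
  (forall M N, T M -> T N -> (forall i j, `|N i j - M i j| < d) -> N = M) ->
  finite_set T.
Proof.
move=> d0 T_le1 sepT.
pose K := Num.Def.archi_bound d^-1.
have dK : d^-1 < K%:R by apply: archi_boundP; rewrite invr_ge0 ltW.
pose code (M : 'M[R]_(p, q)) : {ffun 'I_p * 'I_q -> 'I_(K.*2).+1} :=
  [ffun ij => inord (grid_index K (M ij.1 ij.2))].
have code_inj : {in T &, injective code}.
  move=> M N /set_mem TM /set_mem TN codeMN; apply: esym (sepT _ _ TM TN _) => i j.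
  have /(congr1 val) := congr1 (fun f : {ffun _ -> _} => f (i, j)) codeMN.
  rewrite !ffunE /= !inordK ?grid_index_lt ?T_le1 //.
  move=> /(grid_index_close (T_le1 _ TM i j) (T_le1 _ TN i j)) close.
  have dVd : d^-1 * d = 1 by rewrite mulVf ?gt_eqF.
  have := normr_ge0 (N i j - M i j); have : 0 < d^-1 by rewrite invr_gt0.
  nra.
by rewrite -(eq_finite_set (inj_card_eq code_inj)); apply: finite_finset.
Qed.

Lemma discrete_subgroup_finite (R : realType) (n : nat) (S : set 'M[R]_n.+1) :
  subgroup_O S -> discrete_mx S ->
  exists2 s : seq 'M[R]_n.+1, uniq s & forall M, S M <-> M \in s.
Proof.
move=> groupS discS; have [e [e0 isolated1]] := discS _ (subgroup1 groupS).
have /finite_seqP[s Ss] : finite_set S.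
  apply: (finite_separated_mx (d := e / n.+1%:R)).
  - exact: divr_gt0.
  - by move=> M /(subgroup_orthogonal groupS)/orthogonal_mx_entry.
  - exact: (subgroup_separated groupS e0 isolated1).
by exists (undup s) => [|M]; rewrite ?undup_uniq // mem_undup Ss.
Qed.


Section ConvexHull.
Variables (R : realType) (m : nat).
Implicit Types (A : set 'cV[R]_m) (x : 'cV[R]_m).

Lemma conv_mem A x : A x -> conv A x.
Proof.
move=> Ax; exists 1%N, (fun _ => 1), (fun _ => x).
by split; rewrite ?big_ord1 ?scale1r.
Qed.

Lemma conv_dotv_le A x (c : R) :
  (forall p, A p -> dotv p x <= c) -> forall z, conv A z -> dotv z x <= c.
Proof.
move=> A_le z [k [w [p [w_ge0 w1 Ap ->]]]].
rewrite dotv_suml (eq_bigr (fun i => w i * dotv (p i) x)) => [|i _]; last exact: dotvZl.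
apply: (@le_trans _ _ (\sum_(i < k) w i * c)); last by rewrite -mulr_suml w1 mul1r.
by apply: ler_sum => i _; rewrite ler_wpM2l ?A_le.
Qed.

Lemma conv_dotv_eq A x (c : R) :
  (forall p, A p -> dotv p x = c) -> forall z, conv A z -> dotv z x = c.
Proof.
move=> A_eq z Az; apply/eqP; rewrite eq_le -[c <= _]lerN2 -dotvNr.
by rewrite !(conv_dotv_le _ Az) // => p /A_eq; rewrite ?dotvNr => ->.
Qed.

End ConvexHull.

Section FullDimension.
Variables (R : realType) (n : nat).
Implicit Types (K : set 'cV[R]_n.+1) (u : 'cV[R]_n.+1).

Lemma hyperplane_not_full_dim K u (c : R) :
  u != 0 -> (forall z, K z -> dotv z u = c) -> ~ full_dim K.
Proof.
move=> u0 Ku [p0 [p [Kp0 Kp detD]]].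
set D := \matrix_(i, j) (p j i 0 - p0 i 0).
have uD : u^T *m D = 0.
  apply/rowP => j; rewrite [RHS]mxE -(subrr c) -{1}(Ku _ (Kp j)) -(Ku _ Kp0).
  by rewrite -dotvBl dotvC dotvE !mxE; apply: eq_bigr => i _; rewrite !mxE.
have Dunit : D \in unitmx by rewrite unitmxE unitfE.
have : u^T = 0 by rewrite -(mulmxK Dunit u^T) uD mul0mx.
by move/eqP; rewrite trmx_eq0 (negPf u0).
Qed.

Lemma not_full_dim_hyperplane K p0 (t : seq 'cV[R]_n.+1) :
  K p0 -> (forall q, q \in t -> K q) -> ~ full_dim K ->
  exists2 u, u != 0 & forall q, q \in t -> dotv q u = dotv p0 u.
Proof.
move=> Kp0 Kt not_full.
pose D : 'M[R]_(n.+1, size t) := \matrix_(i, j) (t`_j i 0 - p0 i 0).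
have /rowV0Pn[v /sub_kermxP vD v0] : kermx D != 0.
  rewrite -mxrank_eq0 mxrank_ker subn_eq0 -ltnNge ltn_neqAle rank_leq_row andbT.
  apply: contra_notN not_full => rankD.
  have Dfull : row_full D^T by rewrite /row_full mxrank_tr.
  exists p0, (fun j => t`_(fullrankfun Dfull j)); split => // [j|].
    by apply/Kt/mem_nth.
  have := fullrowsub_unit Dfull; rewrite unitmxE unitfE -det_tr.
  by congr (\det _ != 0); apply/matrixP => i j; rewrite !mxE.
exists v^T => [|q q_t]; first by rewrite trmx_eq0.
have q_idx : (index q t < size t)%N by rewrite index_mem.
apply/eqP; rewrite -subr_eq0 -dotvBl dotvC dotvE trmxK mxE; apply/eqP.
have /matrixP/(_ 0 (Ordinal q_idx)) := vD; rewrite !mxE => vDq.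
by rewrite -[in RHS]vDq; apply: eq_bigr => i _; rewrite !mxE /= nth_index.
Qed.

End FullDimension.

Section SupportFunction.
Variables (R : realType) (n : nat) (S : set 'M[R]_n.+1).
Hypothesis groupS : subgroup_O S.
Implicit Types (a x : 'cV[R]_n.+1).

Local Notation h a x := (support_fn (P S a) x).

Lemma P_orbit a phi : S phi -> P S a (phi *m a).
Proof. by move=> Sphi; apply: conv_mem; exists phi. Qed.

Lemma P_self a : P S a a.
Proof. by have := P_orbit a (subgroup1 groupS); rewrite mul1mx. Qed.

Lemma support_fn_le a x (c : R) :
  (forall phi, S phi -> dotv (phi *m a) x <= c) -> h a x <= c.
Proof.
move=> orbit_le; apply: ge_sup; first by exists (dotv a x), a => //; apply: P_self.
by move=> _ [z Pz <-]; apply: conv_dotv_le Pz => _ [phi [Sphi ->]]; apply: orbit_le.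
Qed.

Lemma support_fn_ge a x phi :
  sphere n a -> sphere n x -> S phi -> dotv (phi *m a) x <= h a x.
Proof.
move=> sa sx Sphi; apply: ub_le_sup; last by exists (phi *m a) => //; apply: P_orbit.
exists 1 => _ [z Pz <-]; apply: conv_dotv_le Pz => _ [psi [Spsi ->]].
exact: sphere_le1 (subgroup_sphere groupS Spsi sa) sx.
Qed.

Lemma support_fn_geN1 a x : sphere n a -> sphere n x -> -1 <= h a x.
Proof.
move=> sa sx; apply: le_trans (support_fn_ge sa sx (subgroup1 groupS)).
by rewrite mul1mx sphere_geN1.
Qed.

Lemma hmax_le1 a : sphere n a -> hmax S a <= 1.
Proof.
move=> sa; apply: ge_sup.
  by exists (h a (delta_mx 0 0)), (delta_mx 0 0) => //; apply: sphere_delta.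
move=> _ [x sx <-]; apply: support_fn_le => phi Sphi.
exact: sphere_le1 (subgroup_sphere groupS Sphi sa) sx.
Qed.

Lemma hmin_ge a (c : R) : (forall x, sphere n x -> c <= h a x) -> c <= hmin S a.
Proof.
move=> c_le; apply: lb_le_inf; last by move=> _ [x sx <-]; apply: c_le.
by exists (h a (delta_mx 0 0)), (delta_mx 0 0) => //; apply: sphere_delta.
Qed.

Lemma hmin_le a x : sphere n a -> sphere n x -> hmin S a <= h a x.
Proof.
move=> sa sx; apply: ge_inf; last by exists x.
by exists (-1) => _ [y sy <-]; apply: support_fn_geN1.
Qed.

Lemma bounded_ratio_of_hmin_ge (c : R) : 0 < c ->
  (forall a, sphere n a -> c <= hmin S a) -> bounded_ratio S.
Proof.
move=> c0 c_le; split=> [a sa|]; first exact: lt_le_trans (c_le a sa).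
exists c^-1 => a sa; have hmin_gt0 := lt_le_trans c0 (c_le a sa).
rewrite /gamma ler_pdivrMr // (le_trans (hmax_le1 sa)) //.
by rewrite -(mulVf (lt0r_neq0 c0)); apply: ler_wpM2l (c_le a sa); rewrite invr_ge0 ltW.
Qed.

Lemma orbit_hyperplane_not_full_dim a u (c : R) : u != 0 ->
  (forall phi, S phi -> dotv (phi *m a) u = c) -> ~ full_dim (P S a).
Proof.
move=> u0 orbit_eq; apply: (hyperplane_not_full_dim u0).
by apply: conv_dotv_eq => _ [phi [Sphi ->]]; apply: orbit_eq.
Qed.

End SupportFunction.

(* A complex eigenvector [y + i z] of a real symmetric matrix has a real
   eigenvalue, since [<Q y, z> = <y, Q z>]; hence [y] or [z] is a real
   eigenvector. *)
Lemma symmetric_eigenvector (R : realType) (m : nat) (Q : 'M[R]_m.+1) :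
  Q^T = Q -> exists mu (w : 'cV[R]_m.+1), w != 0 /\ Q *m w = mu *: w.
Proof.
move=> Qsym; have Qji j k : Q k j = Q j k by rewrite -{1}Qsym mxE.
have [l /eigenvalueP[v vQ v0]] := Theorem7' (map_mx (real_complex R) Q) (ltn0Sn m).
pose Re := @complex.Re R; pose Im := @complex.Im R.
have ReD : {morph Re : x y / x + y} by case=> ? ? [].
have ImD : {morph Im : x y / x + y} by case=> ? ? [].
have ReM (a b : R[i]) : Re (a * b) = Re a * Re b - Im a * Im b by case: a b => ? ? [].
have ImM (a b : R[i]) : Im (a * b) = Re a * Im b + Im a * Re b by case: a b => ? ? [].
pose y := \col_j Re (v 0 j); pose z := \col_j Im (v 0 j).
have Qy : Q *m y = Re l *: y - Im l *: z.
  apply/colP => j; have /rowP/(_ j)/(congr1 Re) := vQ.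
  rewrite /y /z !mxE (big_morph _ ReD (erefl _)) ReM => <-; apply: eq_bigr => k _.
  by rewrite !mxE ReM Qji /= mulr0 subr0 mulrC.
have Qz : Q *m z = Re l *: z + Im l *: y.
  apply/colP => j; have /rowP/(_ j)/(congr1 Im) := vQ.
  rewrite /y /z !mxE (big_morph _ ImD (erefl _)) ImM addrC => <-; apply: eq_bigr => k _.
  by rewrite !mxE ImM Qji /= mulr0 add0r mulrC.
have yz_gt0 : 0 < dotv y y + dotv z z.
  rewrite lt_def addr_ge0 ?dotvv_ge0 // andbT paddr_eq0 ?dotvv_ge0 // !dotvv_eq0.
  apply: contra v0 => /andP[/eqP/colP y0 /eqP/colP z0]; apply/eqP/rowP => j.
  by have := y0 j; have := z0 j; rewrite !mxE; case: (v 0 j) => ? ? /= -> ->.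
have Iml0 : Im l = 0.
  have := dotv_mull Q y z; rewrite Qsym Qz Qy dotvBl dotvDr !dotvZl !dotvZr.
  move=> yz_eq; have /eqP : Im l * (dotv y y + dotv z z) = 0 by nra.
  by rewrite mulf_eq0 (gt_eqF yz_gt0) orbF => /eqP.
rewrite Iml0 scale0r subr0 in Qy; rewrite Iml0 scale0r addr0 in Qz.
have [y0|y0] := eqVneq y 0; last by exists (Re l), y.
exists (Re l), z; split => //; apply: contraTneq yz_gt0 => ->.
by rewrite y0 dotv0l addr0 ltxx.
Qed.

(* Pointwise [t^2 <= 2 h - t], using [h >= 0], which holds as the [t i] sum to 0. *)
Lemma sum_sqr_le_of_sum0 (R : realFieldType) (I : eqType) (r : seq I)
    (t : I -> R) (h : R) :
  {in r, forall i, -1 <= t i <= 1} -> {in r, forall i, t i <= h} ->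
  \sum_(i <- r) t i = 0 -> \sum_(i <- r) t i ^+ 2 <= 2 * h * (size r)%:R.
Proof.
move=> t_bd t_le sum0; case: r => [|i0 r] in t_bd t_le sum0 *.
  by rewrite big_nil mulr0.
have h_ge0 : 0 <= h.
  have : \sum_(i <- i0 :: r) t i <= \sum_(i <- i0 :: r) h.
    by rewrite !big_seq; apply: ler_sum => i /t_le.
  by rewrite sum0 big_const_seq count_predT iter_addr_0 -mulr_natr pmulr_lge0 ?ltr0n.
apply: (@le_trans _ _ (\sum_(i <- i0 :: r) (2 * h - t i))).
  rewrite !big_seq; apply: ler_sum => i ir.
  have := t_le i ir; have /andP[tN1 t1] := t_bd i ir; case: (lerP 0 (t i)); nra.
by rewrite sumrB sum0 subr0 big_const_seq count_predT iter_addr_0 mulr_natr.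
Qed.

Section Orbits.
Variables (R : realType) (n : nat) (S : set 'M[R]_n.+1).
Hypothesis groupS : subgroup_O S.
Variable s : seq 'M[R]_n.+1.
Hypotheses (s_uniq : uniq s) (memS : forall M, S M <-> M \in s).

Lemma sum_subgroup_translate (V : nmodType) psi (F : 'M[R]_n.+1 -> V) : S psi ->
  \sum_(phi <- s) F (psi *m phi) = \sum_(phi <- s) F phi.
Proof.
move=> Spsi; have orthopsi := subgroup_orthogonal groupS Spsi.
rewrite -(big_map (mulmx psi) xpredT); apply/perm_big/uniq_perm => //.
  rewrite map_inj_uniq // => M N /(congr1 (mulmx psi^T)).
  by rewrite !mulmxA orthogonal_mxT // !mul1mx.
move=> M; apply/mapP/idP => [[N /memS SN ->]|/memS SM].
  by apply/memS/(subgroupM groupS).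
exists (psi^T *m M); last by rewrite mulmxA orthopsi mul1mx.
by apply/memS/(subgroupM groupS) => //; apply: (subgroupT groupS).
Qed.

Lemma hmin_le0_of_not_full_dim a : sphere n a -> ~ full_dim (P S a) -> hmin S a <= 0.
Proof.
move=> sa not_full.
have [|u u0 orbit_eq] := not_full_dim_hyperplane (t := [seq phi *m a | phi <- s])
  (P_self groupS a) _ not_full.
  by move=> _ /mapP[phi /memS Sphi ->]; apply: P_orbit.
have {}orbit_eq phi : S phi -> dotv (phi *m a) u = dotv a u.
  by move=> /memS phis; apply/orbit_eq/map_f.
have [r sru] := sphere_normalize u0.
have hmin_le_dotv c : sphere n (c *: u) -> hmin S a <= dotv a (c *: u).
  move=> scu; apply: le_trans (hmin_le groupS sa scu) _.
  by apply: (support_fn_le groupS) => phi Sphi; rewrite !dotvZr orbit_eq.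
have := hmin_le_dotv r sru; have := hmin_le_dotv (- r).
by rewrite scaleNr dotvNr => /(_ (sphereN sru)); lra.
Qed.

Hypothesis spanS : spanning S.

Lemma spanning_fixed_eq0 (v : 'cV[R]_n.+1) :
  (forall psi, S psi -> psi *m v = v) -> v = 0.
Proof.
move=> fixed; have [//|v0] := eqVneq v 0; exfalso.
apply: (orbit_hyperplane_not_full_dim v0 _ (spanS (sphere_delta R n))).
by move=> phi Sphi; rewrite dotv_mull fixed //; apply: (subgroupT groupS).
Qed.

(* The orbit of a unit eigenvector of [Q] stays in its eigenspace, which is
   orthogonal to every row of [Q - mu]. *)
Lemma spanning_commute_scalar Q : Q^T = Q ->
  (forall psi, S psi -> psi *m Q = Q *m psi) -> exists mu, Q = mu%:M.
Proof.
move=> Qsym Qcomm; have [mu [w [w0 Qw]]] := symmetric_eigenvector Qsym.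
have [r srw] := sphere_normalize w0.
exists mu; apply/eqP; rewrite -subr_eq0; apply/eqP/row_matrixP => i; rewrite row0.
have [//|rowi0] := eqVneq (row i (Q - mu%:M)) 0; exfalso.
have : (row i (Q - mu%:M))^T != 0 by rewrite trmx_eq0.
move=> /(orbit_hyperplane_not_full_dim (c := 0)); apply; last exact: spanS srw.
move=> phi Sphi; have eigen : (Q - mu%:M) *m (phi *m (r *: w)) = 0.
  rewrite mulmxBl mul_scalar_mx mulmxA -Qcomm // -mulmxA -[Q *m _]scalemxAr Qw.
  by rewrite -!scalemxAr scalerA mulrC -scalerA subrr.
by rewrite dotvC dotvE trmxK -row_mul eigen row0 mxE.
Qed.

Lemma orbit_sum_eq0 (a : 'cV[R]_n.+1) : \sum_(phi <- s) phi *m a = 0.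
Proof.
apply: spanning_fixed_eq0 => psi Spsi; rewrite mulmx_sumr.
rewrite -[RHS](sum_subgroup_translate (fun phi => phi *m a) Spsi).
by apply: eq_bigr => phi _; rewrite mulmxA.
Qed.

(* The frame operator [sum_phi (phi a) (phi a)^T] of the orbit commutes with
   [S], hence is scalar. *)
Lemma orbit_sum_sqr_const (a : 'cV[R]_n.+1) : exists mu : R,
  forall x, sphere n x -> \sum_(phi <- s) dotv (phi *m a) x ^+ 2 = mu.
Proof.
pose Q := \sum_(phi <- s) (phi *m a) *m (phi *m a)^T.
have [||mu Qmu] := @spanning_commute_scalar Q.
- by rewrite /Q linear_sum; apply: eq_bigr => phi _; rewrite /= trmx_mul trmxK.
- move=> psi Spsi; have orthopsi := subgroup_orthogonal groupS Spsi.
  suff QT : psi *m Q *m psi^T = Q by rewrite -[in RHS]QT -mulmxA orthogonal_mxT // mulmx1.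
  rewrite /Q mulmx_sumr mulmx_suml.
  rewrite -[RHS](sum_subgroup_translate (fun phi => (phi *m a) *m (phi *m a)^T) Spsi).
  by apply: eq_bigr => phi _; rewrite !trmx_mul !mulmxA.
exists mu => x sx; transitivity (dotv x (Q *m x)).
  by rewrite /Q mulmx_suml dotv_sumr; apply: eq_bigr => phi _; rewrite dotv_outer.
by rewrite Qmu mul_scalar_mx dotvZr sx mulr1.
Qed.

Lemma hmin_uniform_lower : exists2 c : R, 0 < c & forall a, sphere n a -> c <= hmin S a.
Proof.
have s1 : 1%:M \in s by apply/memS/(subgroup1 groupS).
have N0 : 0 < 2 * (size s)%:R :> R by rewrite mulr_gt0 // ltr0n; case: (s) s1.
exists (2 * (size s)%:R)^-1 => [|a sa]; first by rewrite invr_gt0.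
apply: hmin_ge => x sx; rewrite -(ler_pM2l N0) mulfV ?gt_eqF //.
have [mu sum_mu] := orbit_sum_sqr_const a.
have mu_ge1 : 1 <= mu.
  rewrite -(sum_mu a sa) (bigD1_seq _ s1 s_uniq) /= mul1mx sa expr1n lerDl.
  by apply: sumr_ge0 => phi _; apply: sqr_ge0.
suff : mu <= 2 * support_fn (P S a) x * (size s)%:R by nra.
rewrite -(sum_mu x sx); apply: sum_sqr_le_of_sum0 => [phi /memS Sphi|phi /memS Sphi|].
- have sphia := subgroup_sphere groupS Sphi sa.
  by rewrite sphere_geN1 ?sphere_le1.
- exact: support_fn_ge.
by rewrite -dotv_suml orbit_sum_eq0 dotv0l.
Qed.

End Orbits.

Theorem proposition2p1 (R : realType) (n : nat) (S : set 'M[R]_n.+1) :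
  subgroup_O S -> discrete_mx S ->
  (spanning S <-> bounded_ratio S).
Proof.
move=> groupS discS; have [s s_uniq memS] := discrete_subgroup_finite groupS discS.
split=> [spanS | [hmin_gt0 _] a sa].
  have [c c0 c_le] := hmin_uniform_lower groupS s_uniq memS spanS.
  exact: (bounded_ratio_of_hmin_ge groupS c0 c_le).
apply: contrapT => /(hmin_le0_of_not_full_dim groupS memS sa).
by rewrite leNgt hmin_gt0.
Qed.
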